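(* Let $D$ be a digraph and $X, Y \subseteq V(D)$ such that no vertex of $X$ has an ingoing edge and no vertex of $Y$ has an outgoing edge. Suppose that $X$ is joinable to $Y$ and that $X'$ is joinable to $Y'$ for some $X' \subseteq X$ and $Y' \subseteq Y$ with $|X \setminus X'| < \infty$. Then there is some $Y'' \subseteq Y$ such that $X$ is joinable to $Y''$ and $|Y'' \setminus Y'| \le |X \setminus X'|$.
   Context: Digraphs have no loops or parallel edges. An $(A,B)$-path is a directed path whose initial vertex is in $A$, whose terminal vertex is in $B$, and which is internally disjoint from $A \cup B$; an $(A,B)$-path-system is a set of pairwise vertex-disjoint $(A,B)$-paths. $V^-(\mathcal{P})$ is the set of initial vertices of the paths in $\mathcal{P}$. $A$ is joinable to $B$ (in $D$) if there is an $(A,B)$-path-system $\mathcal{P}$ in $D$ with $V^-(\mathcal{P}) = A$. *)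

(* Digraphs on an arbitrary (possibly infinite) vertex type V,
   given by an edge relation E (no parallel edges automatically; loops are
   excluded by a hypothesis of the theorem). *)
From Stdlib Require Import List.
Import ListNotations.

Section Digraphs.
Context {V : Type}.

Fixpoint is_walk (E : V -> V -> Prop) (l : list V) : Prop :=
  match l with
  | x :: ((y :: _) as t) => E x y /\ is_walk E t
  | _ => True
  end.

Definition dpath (E : V -> V -> Prop) (p : list V) : Prop :=
  p <> [] /\ NoDup p /\ is_walk E p.

Definition AB_path (E : V -> V -> Prop) (A B : V -> Prop) (p : list V) : Prop :=
  dpath E p /\
  ((exists a, p = [a] /\ A a /\ B a) \/
   (exists a mid b, p = a :: mid ++ [b] /\ A a /\ B b /\
      forall v, In v mid -> ~ A v /\ ~ B v)).

Definition AB_path_system (E : V -> V -> Prop) (A B : V -> Prop)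
    (P : list V -> Prop) : Prop :=
  (forall p, P p -> AB_path E A B p) /\
  (forall p q, P p -> P q -> p <> q -> forall v, In v p -> ~ In v q).

Definition init_vertices (P : list V -> Prop) : V -> Prop :=
  fun a => exists p, P p /\ hd_error p = Some a.

Definition joinable (E : V -> V -> Prop) (A B : V -> Prop) : Prop :=
  exists P, AB_path_system E A B P /\ (forall a, init_vertices P a <-> A a).

Definition subset (A B : V -> Prop) : Prop := forall v, A v -> B v.

Definition setminus (A B : V -> Prop) : V -> Prop := fun v => A v /\ ~ B v.

Definition finite_set (A : V -> Prop) : Prop :=
  exists l : list V, forall v, A v -> In v l.

Definition card_le (A B : V -> Prop) : Prop :=
  exists f : V -> V, (forall v, A v -> B (f v)) /\
    (forall u v, A u -> A v -> f u = f v -> u = v).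

End Digraphs.

From Stdlib Require Import List Classical ClassicalEpsilon Lia.
Import ListNotations.

(* By induction on the finite set X \ X', it suffices to add one vertex x of X \ X': from the
   linkage P of X and the linkage Q of X' we build a linkage of X' + x into Y all of whose paths
   but at most one end in Y'.  Following Pym, we shrink a set T of vertices of Q.  A path of P
   starting in X' + x is good for T if its first vertex c in T is also the first vertex of T on
   its Q-path, so that it can switch to Q at c.  Initially only the path from x can be bad.
   Removing every vertex that lies on a Q-path before the first T-vertex of a bad path repairs
   that path and creates at most one new bad path.  On the intersection of all these rounds,
   which stabilises along every finite path, the good paths switch to Q and end in Y', while the
   at most one bad path avoids T altogether and is kept as it is. *)

Section Lists.
Context {A : Type}.

Definition precedes (l : list A) (u w : A) : Prop :=
  exists a b, l = a ++ w :: b /\ In u a.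

Definition first_in (T : A -> Prop) (l : list A) (c : A) : Prop :=
  exists pre suf, l = pre ++ c :: suf /\ T c /\ forall w, In w pre -> ~ T w.

Lemma NoDup_split_unique a1 b1 a2 b2 (c : A) :
  NoDup (a1 ++ c :: b1) -> a1 ++ c :: b1 = a2 ++ c :: b2 -> a1 = a2 /\ b1 = b2.
Proof.
  revert a2; induction a1 as [|d a1 IH]; intros [|e a2] Hnd Heq; simpl in Hnd, Heq.
  - injection Heq as ->. auto.
  - injection Heq as <- ->. apply NoDup_cons_iff in Hnd as [Hc _].
    exfalso. apply Hc, in_elt.
  - injection Heq as -> <-. apply NoDup_cons_iff in Hnd as [Hc _].
    exfalso. apply Hc, in_elt.
  - injection Heq as <- Heq. apply NoDup_cons_iff in Hnd as [_ Hnd].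
    destruct (IH a2 Hnd Heq) as [-> ->]. auto.
Qed.

Lemma precedes_split a b (u w : A) : In w b -> precedes (a ++ u :: b) u w.
Proof.
  intros Hw. destruct (in_split _ _ Hw) as [b1 [b2 ->]].
  exists (a ++ u :: b1), b2. rewrite <- app_assoc. split; [reflexivity|].
  apply in_elt.
Qed.

Lemma precedes_irrefl l (u : A) : NoDup l -> ~ precedes l u u.
Proof.
  intros Hnd [a [b [-> Hu]]]. apply (NoDup_remove_2 _ _ _ Hnd).
  apply in_or_app. now left.
Qed.

Lemma precedes_head (a : A) l w : NoDup (a :: l) -> ~ precedes (a :: l) w a.
Proof.
  intros Hnd [[|d pre] [b [Ep Hw]]]; [easy|]. injection Ep as <- ->.
  apply NoDup_cons_iff in Hnd as [Ha _]. apply Ha, in_elt.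
Qed.

Lemma precedes_total l (u w : A) :
  In u l -> In w l -> u <> w -> precedes l u w \/ precedes l w u.
Proof.
  induction l as [|y l IH]; [easy|]. intros [->|Hu] [->|Hw] Hne; try easy.
  - left. exact (precedes_split [] l u w Hw).
  - right. exact (precedes_split [] l w u Hu).
  - destruct (IH Hu Hw Hne) as [[a [b [-> H]]]|[a [b [-> H]]]];
      [left|right]; exists (y :: a), b; split; [reflexivity|now right|reflexivity|now right].
Qed.

Lemma precedes_trans l (u v w : A) :
  NoDup l -> precedes l u v -> precedes l v w -> precedes l u w.
Proof.
  intros Hnd [a1 [b1 [E1 Hu]]] [a2 [b2 [E2 Hv]]].
  destruct (in_split _ _ Hv) as [a3 [b3 ->]].
  assert (E3 : l = a3 ++ v :: b3 ++ w :: b2) by (rewrite E2, <- app_assoc; reflexivity).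
  rewrite E1 in Hnd. rewrite E3 in E1.
  destruct (NoDup_split_unique _ _ _ _ _ Hnd (eq_sym E1)) as [<- _].
  exists (a1 ++ v :: b3), b2. split; [exact E2|]. apply in_or_app. now left.
Qed.

Lemma first_in_In T l (c : A) : first_in T l c -> In c l.
Proof. intros [pre [suf [-> _]]]. apply in_elt. Qed.

Lemma first_in_unique T l (c1 c2 : A) : first_in T l c1 -> first_in T l c2 -> c1 = c2.
Proof.
  intros [pre1 [suf1 [E1 [T1 H1]]]] [pre2 [suf2 [E2 [T2 H2]]]].
  rewrite E1 in E2. clear E1. revert pre2 E2 H2.
  induction pre1 as [|a pre1 IH]; intros [|b pre2] E2 H2; simpl in E2.
  - now injection E2.
  - injection E2 as <- E2. exfalso. exact (H2 c1 (or_introl eq_refl) T1).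
  - injection E2 as -> E2. exfalso. exact (H1 c2 (or_introl eq_refl) T2).
  - injection E2 as <- E2.
    exact (IH (fun w Hw => H1 w (or_intror Hw)) pre2 E2 (fun w Hw => H2 w (or_intror Hw))).
Qed.

Lemma first_in_or_avoid T (l : list A) :
  (exists c, first_in T l c) \/ (forall w, In w l -> ~ T w).
Proof.
  induction l as [|a l [[c [pre [suf [-> [Tc Hpre]]]]]|IH]].
  - right. easy.
  - destruct (classic (T a)) as [Ta|Ta].
    + left. exists a, [], (pre ++ c :: suf). easy.
    + left. exists c, (a :: pre), suf. split; [reflexivity|]. split; [exact Tc|].
      intros w [<-|Hw]; auto.
  - destruct (classic (T a)) as [Ta|Ta].
    + left. exists a, [], l. easy.
    + right. intros w [<-|Hw]; auto.
Qed.

Lemma suffix_last (a s l : list A) b : a ++ s = l ++ [b] -> s <> [] -> exists l', s = l' ++ [b].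
Proof.
  induction s as [|b' s _] using rev_ind; [easy|]. intros Heq _.
  rewrite app_assoc in Heq. apply app_inj_tail in Heq as [_ ->]. now exists s.
Qed.

End Lists.

Definition set_add {V : Type} (A : V -> Prop) (x : V) : V -> Prop :=
  fun v => A v \/ v = x.

Definition at_most_one {T : Type} (S : T -> Prop) : Prop :=
  forall a b, S a -> S b -> a = b.

Lemma set_add_subset {V : Type} (A B : V -> Prop) x : subset A B -> B x -> subset (set_add A x) B.
Proof. intros HA Bx v [Av| ->]; [exact (HA v Av)|exact Bx]. Qed.

Section Paths.
Context {V : Type} (E : V -> V -> Prop).

Lemma is_walk_app l (c : V) r :
  is_walk E (l ++ c :: r) <-> is_walk E (l ++ [c]) /\ is_walk E (c :: r).
Proof.
  induction l as [|a [|b l] IH]; simpl in *.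
  - tauto.
  - destruct r; simpl; tauto.
  - rewrite IH. tauto.
Qed.

Lemma is_walk_interior a m (b v : V) :
  is_walk E (a :: m ++ [b]) -> In v m -> (exists u, E u v) /\ (exists w, E v w).
Proof.
  revert a; induction m as [|d m IH]; intros a Hw Hv; [easy|].
  destruct Hw as [Had Hw]. destruct Hv as [<-|Hv]; [|exact (IH d Hw Hv)].
  split; [now exists a|].
  destruct m as [|e m]; destruct Hw as [Hde _]; eauto.
Qed.

Lemma AB_path_ends A B p :
  AB_path E A B p ->
  dpath E p /\ (exists a t, p = a :: t /\ A a) /\ (exists l b, p = l ++ [b] /\ B b).
Proof.
  intros [Hp [[a [-> [Ha Hb]]] | [a [mid [b [-> [Ha [Hb _]]]]]]]].
  - split; [exact Hp|]. split; [now exists a, []|]. now exists [], a.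
  - split; [exact Hp|]. split; [now exists a, (mid ++ [b])|]. now exists (a :: mid), b.
Qed.

Lemma AB_path_of_ends (X Y A B : V -> Prop) p a t l b :
  (forall u v, X v -> ~ E u v) -> (forall v w, Y v -> ~ E v w) ->
  subset A X -> subset B Y -> dpath E p ->
  p = a :: t -> A a -> p = l ++ [b] -> B b -> AB_path E A B p.
Proof.
  intros noin noout HA HB Hp -> Ha El Hb. split; [exact Hp|].
  induction t as [|b' mid _] using rev_ind.
  - left. exists a. apply (app_inj_tail [] l) in El as [_ <-]. auto.
  - right. change (a :: mid ++ [b']) with ((a :: mid) ++ [b']) in El, Hp.
    apply app_inj_tail in El as [_ ->]. exists a, mid, b. do 3 (split; [easy|]).
    intros v Hv. destruct Hp as [_ [_ Hw]].
    destruct (is_walk_interior a mid b v Hw Hv) as [[u Huv] [w Hvw]].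
    split; [intros Av%HA; exact (noin u v Av Huv)|intros Bv%HB; exact (noout v w Bv Hvw)].
Qed.

Lemma AB_path_ext (A A' B : V -> Prop) p :
  (forall v, A v <-> A' v) -> AB_path E A B p -> AB_path E A' B p.
Proof.
  intros HA [Hp [[a [Ep [Ha Hb]]] | [a [mid [b [Ep [Ha [Hb Hmid]]]]]]]];
    split; [exact Hp| |exact Hp|].
  - left. exists a. rewrite <- HA. auto.
  - right. exists a, mid, b. rewrite <- HA. do 3 (split; [easy|]).
    intros v Hv. rewrite <- HA. now apply Hmid.
Qed.

Lemma joinable_ext (A A' B : V -> Prop) :
  (forall v, A v <-> A' v) -> joinable E A B -> joinable E A' B.
Proof.
  intros HA [P [[HPab HPdisj] HPinit]]. exists P. split; [split; [|exact HPdisj]|].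
  - intros p Hp. exact (AB_path_ext A A' B p HA (HPab p Hp)).
  - intros a. now rewrite HPinit.
Qed.

Lemma path_system_meet (A B : V -> Prop) P p1 p2 v :
  AB_path_system E A B P -> P p1 -> P p2 -> In v p1 -> In v p2 -> p1 = p2.
Proof.
  intros [_ Hdisj] H1 H2 I1 I2. apply NNPP. intros Hne. exact (Hdisj p1 p2 H1 H2 Hne v I1 I2).
Qed.

End Paths.

Section OneStep.
Context {V : Type} (E : V -> V -> Prop) (X Y X' Y' : V -> Prop) (x : V).
Context (P Q : list V -> Prop).
Hypothesis noinX : forall u v, X v -> ~ E u v.
Hypothesis nooutY : forall v w, Y v -> ~ E v w.
Hypothesis HP : AB_path_system E X Y P.
Hypothesis HPinit : forall a, init_vertices P a <-> X a.
Hypothesis HQ : AB_path_system E X' Y' Q.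
Hypothesis HQinit : forall a, init_vertices Q a <-> X' a.
Hypothesis HX' : subset X' X.
Hypothesis HY' : subset Y' Y.
Hypothesis Hx : X x.

Definition Pstart p := P p /\ exists a t, p = a :: t /\ set_add X' x a.

Definition entry (T : V -> Prop) c := T c /\ forall q w, Q q -> precedes q w c -> ~ T w.
Definition good T p := exists c, first_in T p c /\ entry T c.
Definition bad T p := Pstart p /\ ~ good T p.
Definition blocker T u := exists p, bad T p /\ first_in T p u.
Definition Q_precedes w u := exists q, Q q /\ precedes q w u.
Definition trim (T : V -> Prop) w := T w /\ forall u, blocker T u -> ~ Q_precedes w u.
Definition forward_closed (T : V -> Prop) := forall q c w, Q q -> T c -> precedes q c w -> T w.

Definition Q_vertex w := exists q, Q q /\ In w q.
Fixpoint layer n : V -> Prop := match n with 0 => Q_vertex | S n => trim (layer n) end.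
Definition core w := forall n, layer n w.

Lemma Q_NoDup q : Q q -> NoDup q.
Proof. intros Hq. apply (AB_path_ends E _ _ q (proj1 HQ q Hq)). Qed.

Lemma P_meet p1 p2 v : P p1 -> P p2 -> In v p1 -> In v p2 -> p1 = p2.
Proof. exact (path_system_meet E X Y P p1 p2 v HP). Qed.

Lemma Q_meet q1 q2 v : Q q1 -> Q q2 -> In v q1 -> In v q2 -> q1 = q2.
Proof. exact (path_system_meet E X' Y' Q q1 q2 v HQ). Qed.

Lemma entry_unique T q c1 c2 :
  entry T c1 -> entry T c2 -> Q q -> In c1 q -> In c2 q -> c1 = c2.
Proof.
  intros [T1 H1] [T2 H2] Hq I1 I2. apply NNPP. intros Hne.
  destruct (precedes_total q c1 c2 I1 I2 Hne) as [Hp|Hp].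
  - exact (H2 q c1 Hq Hp T1).
  - exact (H1 q c2 Hq Hp T2).
Qed.

Lemma good_antitone (T T' : V -> Prop) p c :
  (forall w, T' w -> T w) -> first_in T p c -> entry T c -> T' c -> good T' p.
Proof.
  intros Hsub [pre [suf [Ep [_ Hpre]]]] [_ Hc] T'c. exists c. split.
  - exists pre, suf. split; [exact Ep|]. split; [exact T'c|].
    intros w Hw T'w. exact (Hpre w Hw (Hsub w T'w)).
  - split; [exact T'c|]. intros q w Hq Hwc T'w. exact (Hc q w Hq Hwc (Hsub w T'w)).
Qed.

Lemma trim_forward_closed T : forward_closed T -> forward_closed (trim T).
Proof.
  intros HT q c w Hq [Tc Hc] Hcw. split; [exact (HT q c w Hq Tc Hcw)|].
  intros u Hu [q' [Hq' Hwu]].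
  assert (q' = q) as ->.
  { apply (Q_meet q' q w Hq' Hq).
    - destruct Hwu as [a [b [-> Hw]]]. apply in_or_app. now left.
    - destruct Hcw as [a [b [-> _]]]. apply in_elt. }
  apply (Hc u Hu). exists q. split; [exact Hq|].
  exact (precedes_trans q c w u (Q_NoDup q Hq) Hcw Hwu).
Qed.

Lemma bad_trim_good T p u :
  at_most_one (bad T) -> bad T p -> first_in T p u -> good (trim T) p.
Proof.
  intros Hone Hbad Hfirst.
  assert (Hblock : blocker T u) by (exists p; auto).
  assert (Hu : trim T u).
  { split; [destruct Hfirst as [pre [suf [_ [Tu _]]]]; exact Tu|].
    intros u' [p' [Hbad' Hfirst']] [q [Hq Huu']].
    rewrite <- (Hone p p' Hbad Hbad') in Hfirst'.
    rewrite (first_in_unique T p u' u Hfirst' Hfirst) in Huu'.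
    exact (precedes_irrefl q u (Q_NoDup q Hq) Huu'). }
  exists u. split.
  - destruct Hfirst as [pre [suf [Ep [_ Hpre]]]]. exists pre, suf.
    split; [exact Ep|]. split; [exact Hu|]. intros w Hw [Tw _]. exact (Hpre w Hw Tw).
  - split; [exact Hu|]. intros q w Hq Hwu [_ Hw]. apply (Hw u Hblock). now exists q.
Qed.

Lemma bad_trim_blocked T p :
  good T p -> bad (trim T) p ->
  exists c u, first_in T p c /\ entry T c /\ blocker T u /\ Q_precedes c u.
Proof.
  intros [c [Hfirst Hentry]] [_ Hbad].
  destruct (classic (exists u, blocker T u /\ Q_precedes c u)) as [[u Hu]|Hfree].
  - exists c, u. tauto.
  - exfalso. apply Hbad, (good_antitone T (trim T) p c); auto.
    + now intros w [Tw _].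
    + split; [apply Hentry|]. intros u Hu Hcu. apply Hfree. eauto.
Qed.

Lemma trim_at_most_one_bad T : at_most_one (bad T) -> at_most_one (bad (trim T)).
Proof.
  intros Hone p1 p2 B1 B2.
  destruct (classic (good T p1)) as [G1|G1]; destruct (classic (good T p2)) as [G2|G2].
  - destruct (bad_trim_blocked T p1 G1 B1) as [c1 [u1 [F1 [H1 [[s1 [S1 U1]] [q1 [Hq1 C1]]]]]]].
    destruct (bad_trim_blocked T p2 G2 B2) as [c2 [u2 [F2 [H2 [[s2 [S2 U2]] [q2 [Hq2 C2]]]]]]].
    rewrite <- (Hone s1 s2 S1 S2) in U2.
    rewrite (first_in_unique T s1 u2 u1 U2 U1) in C2.
    assert (q2 = q1) as ->.
    { apply (Q_meet q2 q1 u1 Hq2 Hq1);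
        [destruct C2 as [a [b [-> _]]]|destruct C1 as [a [b [-> _]]]]; apply in_elt. }
    assert (c1 = c2) as <-.
    { apply (entry_unique T q1 c1 c2 H1 H2 Hq1);
        [destruct C1 as [a [b [-> Hc]]]|destruct C2 as [a [b [-> Hc]]]];
        apply in_or_app; now left. }
    exact (P_meet p1 p2 c1 (proj1 (proj1 B1)) (proj1 (proj1 B2))
             (first_in_In T p1 c1 F1) (first_in_In T p2 c1 F2)).
  - destruct (bad_trim_blocked T p1 G1 B1) as [c1 [u1 [_ [_ [[s1 [S1 U1]] _]]]]].
    rewrite (Hone s1 p2 S1 (conj (proj1 B2) G2)) in U1.
    exfalso. exact (proj2 B2 (bad_trim_good T p2 u1 Hone (conj (proj1 B2) G2) U1)).
  - destruct (bad_trim_blocked T p2 G2 B2) as [c2 [u2 [_ [_ [[s2 [S2 U2]] _]]]]].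
    rewrite (Hone s2 p1 S2 (conj (proj1 B1) G1)) in U2.
    exfalso. exact (proj2 B1 (bad_trim_good T p1 u2 Hone (conj (proj1 B1) G1) U2)).
  - exact (Hone p1 p2 (conj (proj1 B1) G1) (conj (proj1 B2) G2)).
Qed.

Lemma start_good p a t : p = a :: t -> X' a -> good Q_vertex p.
Proof.
  intros Ep Ha. apply HQinit in Ha as [[|a' qt] [Hq Hhd]]; [discriminate|].
  injection Hhd as ->. exists a. split.
  - exists [], t. split; [exact Ep|]. split; [now exists (a :: qt); split; [|left]|easy].
  - split; [now exists (a :: qt); split; [|left]|].
    intros q' w Hq' Hwa _.
    assert (q' = a :: qt) as ->.
    { apply (Q_meet q' (a :: qt) a Hq' Hq); [|now left].
      destruct Hwa as [pre [b [-> _]]]. apply in_elt. }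
    exact (precedes_head a qt w (Q_NoDup _ Hq) Hwa).
Qed.

Lemma Q_vertex_forward_closed : forward_closed Q_vertex.
Proof.
  intros q c w Hq _ [a [b [-> _]]]. exists (a ++ w :: b). split; [exact Hq|apply in_elt].
Qed.

Lemma Q_vertex_at_most_one_bad : at_most_one (bad Q_vertex).
Proof.
  assert (Hx_start : forall p, bad Q_vertex p -> exists t, p = x :: t).
  { intros p [[_ [a [t [Ep [Ha| ->]]]]] Hbad]; [|now exists t].
    exfalso. exact (Hbad (start_good p a t Ep Ha)). }
  intros p1 p2 B1 B2.
  destruct (Hx_start p1 B1) as [t1 E1]. destruct (Hx_start p2 B2) as [t2 E2].
  apply (P_meet p1 p2 x (proj1 (proj1 B1)) (proj1 (proj1 B2))); [rewrite E1|rewrite E2]; now left.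
Qed.

Lemma layer_invariant n : forward_closed (layer n) /\ at_most_one (bad (layer n)).
Proof.
  induction n as [|n [IH1 IH2]].
  - exact (conj Q_vertex_forward_closed Q_vertex_at_most_one_bad).
  - exact (conj (trim_forward_closed _ IH1) (trim_at_most_one_bad _ IH2)).
Qed.

Lemma layer_antitone m n w : m <= n -> layer n w -> layer m w.
Proof. induction 1; [easy|]. intros [Hw _]. exact (IHle Hw). Qed.

Lemma layer_stable (L : list V) :
  exists N, forall n, N <= n -> forall w, In w L -> layer n w -> core w.
Proof.
  induction L as [|a L [N IH]]; [now exists 0|].
  destruct (classic (core a)) as [Ha|Ha].
  - exists N. intros n Hn w [<-|Hw]; [auto|exact (IH n Hn w Hw)].
  - apply not_all_ex_not in Ha as [k Hk]. exists (Nat.max N k).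
    intros n Hn w [<-|Hw] Hlw.
    + exfalso. apply Hk, (layer_antitone k n); [lia|exact Hlw].
    + apply (IH n); [lia|exact Hw|exact Hlw].
Qed.

Lemma core_forward_closed : forward_closed core.
Proof. intros q c w Hq Hc Hcw n. exact (proj1 (layer_invariant n) q c w Hq (Hc n) Hcw). Qed.

Lemma bad_core_eventually p : bad core p -> exists N, forall n, N <= n -> bad (layer n) p.
Proof.
  intros [Hstart Hbad]. destruct (layer_stable p) as [N HN]. exists N.
  intros n Hn. split; [exact Hstart|]. intros [c [Hfirst Hentry]].
  apply Hbad, (good_antitone (layer n) core p c); auto.
  exact (HN n Hn c (first_in_In _ _ _ Hfirst) (proj1 Hentry)).
Qed.

Lemma core_at_most_one_bad : at_most_one (bad core).
Proof.
  intros p1 p2 B1 B2.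
  destruct (bad_core_eventually p1 B1) as [N1 H1].
  destruct (bad_core_eventually p2 B2) as [N2 H2].
  apply (proj2 (layer_invariant (Nat.max N1 N2))); [apply H1|apply H2]; lia.
Qed.

Lemma bad_core_avoids p : bad core p -> forall w, In w p -> ~ core w.
Proof.
  intros Hbad.
  destruct (first_in_or_avoid core p) as [[c Hfirst]|Havoid]; [exfalso|exact Havoid].
  assert (Hblocked : exists q w, Q q /\ precedes q w c /\ core w).
  { apply NNPP. intros Hfree. apply (proj2 Hbad). exists c. split; [exact Hfirst|].
    split; [destruct Hfirst as [pre [suf [_ [Hc _]]]]; exact Hc|].
    intros q w Hq Hwc Hw. apply Hfree. eauto. }
  destruct Hblocked as [q [w [Hq [Hwc Hw]]]].
  (* For large n, c is a blocker of layer n, so w cannot survive into layer (S n). *)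
  destruct (bad_core_eventually p Hbad) as [N1 H1].
  destruct (layer_stable p) as [N2 H2].
  set (n := Nat.max N1 N2).
  assert (Hc : blocker (layer n) c).
  { exists p. split; [apply H1; lia|].
    destruct Hfirst as [pre [suf [Ep [Hc Hpre]]]]. exists pre, suf.
    split; [exact Ep|]. split; [exact (Hc n)|].
    intros v Hv Hlv. apply (Hpre v Hv), (H2 n); [lia| |exact Hlv].
    rewrite Ep. apply in_or_app. now left. }
  exact (proj2 (Hw (S n)) c Hc (ex_intro _ q (conj Hq Hwc))).
Qed.

Definition reroute p r :=
  (exists pre c suf qa qs, p = pre ++ c :: suf /\ (forall w, In w pre -> ~ core w) /\
     entry core c /\ Q (qa ++ c :: qs) /\ r = pre ++ c :: qs)
  \/ ((forall w, In w p -> ~ core w) /\ r = p).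

Definition rerouted r := exists p, Pstart p /\ reroute p r.

Definition Y1 v := Y' v \/ exists l, bad core (l ++ [v]).

Lemma Y1_subset : subset Y1 Y.
Proof.
  intros v [Hv|[l [[Hp _] _]]]; [exact (HY' v Hv)|].
  destruct (AB_path_ends E X Y _ (proj1 HP _ Hp)) as [_ [_ [l' [b [Eb Hb]]]]].
  apply app_inj_tail in Eb as [_ ->]. exact Hb.
Qed.

Lemma Y1_new_unique : at_most_one (setminus Y1 Y').
Proof.
  intros v1 v2 [[H1|[l1 B1]] N1] [[H2|[l2 B2]] N2]; try contradiction.
  pose proof (core_at_most_one_bad _ _ B1 B2) as Heq.
  now apply app_inj_tail in Heq as [_ ->].
Qed.

Lemma core_on_tail qa c qs v : Q (qa ++ c :: qs) -> core c -> In v (c :: qs) -> core v.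
Proof.
  intros Hq Hc [<-|Hv]; [exact Hc|].
  exact (core_forward_closed _ c v Hq Hc (precedes_split qa qs c v Hv)).
Qed.

Lemma avoid_bad p : Pstart p -> (forall w, In w p -> ~ core w) -> bad core p.
Proof.
  intros Hstart Havoid. split; [exact Hstart|]. intros [c [Hfirst [Hc _]]].
  exact (Havoid c (first_in_In _ _ _ Hfirst) Hc).
Qed.

Lemma reroute_hd p r : reroute p r -> hd_error r = hd_error p.
Proof.
  intros [[[|a pre] [c [suf [qa [qs [-> [_ [_ [_ ->]]]]]]]]]|[_ ->]]; reflexivity.
Qed.

Lemma reroute_exists p : Pstart p -> exists r, reroute p r.
Proof.
  intros Hstart. destruct (classic (good core p)) as [[c [Hfirst Hentry]]|Hbad].
  - destruct Hfirst as [pre [suf [Ep [Hc Hpre]]]].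
    destruct (Hc 0) as [q [Hq Hcq]]. destruct (in_split _ _ Hcq) as [qa [qs ->]].
    exists (pre ++ c :: qs). left. exists pre, c, suf, qa, qs. auto.
  - exists p. right. split; [|reflexivity].
    exact (bad_core_avoids p (conj Hstart Hbad)).
Qed.

Lemma reroute_functional p r1 r2 : Pstart p -> reroute p r1 -> reroute p r2 -> r1 = r2.
Proof.
  intros Hstart.
  assert (Hcut : forall pre c suf, p = pre ++ c :: suf -> (forall w, In w pre -> ~ core w) ->
            entry core c -> (forall w, In w p -> ~ core w) -> False).
  { intros pre c suf -> _ [Hc _] Havoid. exact (Havoid c (in_elt c pre suf) Hc). }
  intros [[pre1 [c1 [suf1 [qa1 [qs1 [E1 [A1 [C1 [Q1 ->]]]]]]]]]|[A1 ->]]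
         [[pre2 [c2 [suf2 [qa2 [qs2 [E2 [A2 [C2 [Q2 ->]]]]]]]]]|[A2 ->]].
  - assert (c1 = c2) as <-.
    { apply (first_in_unique core p); [exists pre1, suf1|exists pre2, suf2];
        split; auto; split; auto; [apply C1|apply C2]. }
    assert (Hnd : NoDup p) by apply (AB_path_ends E X Y p (proj1 HP p (proj1 Hstart))).
    rewrite E1 in Hnd. rewrite E1 in E2.
    destruct (NoDup_split_unique _ _ _ _ _ Hnd E2) as [<- _].
    assert (Hq : qa1 ++ c1 :: qs1 = qa2 ++ c1 :: qs2) by
      (apply (Q_meet _ _ c1 Q1 Q2); apply in_elt).
    rewrite <- Hq in Q2.
    destruct (NoDup_split_unique _ _ _ _ _ (Q_NoDup _ Q2) Hq) as [_ <-]. reflexivity.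
  - exfalso. exact (Hcut pre1 c1 suf1 E1 A1 C1 A2).
  - exfalso. exact (Hcut pre2 c2 suf2 E2 A2 C2 A1).
  - reflexivity.
Qed.

Lemma reroute_In p r v : reroute p r -> In v r ->
  (In v p /\ ~ core v) \/
  (exists c q, entry core c /\ In c p /\ Q q /\ In c q /\ In v q /\ core v).
Proof.
  intros [[pre [c [suf [qa [qs [-> [Hpre [Hc [Hq ->]]]]]]]]]|[Havoid ->]] Hv.
  - apply in_app_or in Hv as [Hv|Hv].
    + left. split; [apply in_or_app; now left|exact (Hpre v Hv)].
    + right. exists c, (qa ++ c :: qs). do 4 (split; [auto using in_elt|]).
      split; [apply in_or_app; now right|exact (core_on_tail qa c qs v Hq (proj1 Hc) Hv)].
  - left. auto.
Qed.

Lemma rerouted_disjoint r1 r2 :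
  rerouted r1 -> rerouted r2 -> r1 <> r2 -> forall v, In v r1 -> ~ In v r2.
Proof.
  intros [p1 [S1 R1]] [p2 [S2 R2]] Hne v I1 I2. apply Hne.
  assert (p1 = p2 -> r1 = r2) as Hsame.
  { intros <-. exact (reroute_functional p1 r1 r2 S1 R1 R2). }
  destruct (reroute_In p1 r1 v R1 I1) as [[Ip1 N1]|[c1 [q1 [C1 [Cp1 [Q1 [Cq1 [Vq1 K1]]]]]]]];
  destruct (reroute_In p2 r2 v R2 I2) as [[Ip2 N2]|[c2 [q2 [C2 [Cp2 [Q2 [Cq2 [Vq2 K2]]]]]]]];
    try contradiction.
  - exact (Hsame (P_meet p1 p2 v (proj1 S1) (proj1 S2) Ip1 Ip2)).
  - rewrite (Q_meet q1 q2 v Q1 Q2 Vq1 Vq2) in Cq1.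
    rewrite (entry_unique core q2 c1 c2 C1 C2 Q2 Cq1 Cq2) in Cp1.
    exact (Hsame (P_meet p1 p2 c2 (proj1 S1) (proj1 S2) Cp1 Cp2)).
Qed.

Lemma reroute_AB_path p r : Pstart p -> reroute p r -> AB_path E (set_add X' x) Y1 r.
Proof.
  intros [Hp [a [t [Ep Ha]]]] Hr.
  destruct (AB_path_ends E X Y p (proj1 HP p Hp)) as [Hdp [_ [l [b [El Hb]]]]].
  assert (Hstart : exists t', r = a :: t').
  { pose proof (reroute_hd p r Hr) as Hhd. rewrite Ep in Hhd.
    destruct r as [|a' t']; simpl in Hhd; [discriminate|]. injection Hhd as ->. now exists t'. }
  destruct Hstart as [t' Er].
  destruct Hr as [[pre [c [suf [qa [qs [Ep' [Hpre [Hc [Hq ->]]]]]]]]]|[Havoid ->]].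
  - destruct (AB_path_ends E X' Y' _ (proj1 HQ _ Hq)) as [[_ [NDq Wq]] [_ [lq [b' [Elq Hb']]]]].
    destruct (suffix_last qa (c :: qs) lq b' Elq) as [l' El']; [discriminate|].
    apply (AB_path_of_ends E X Y _ _ _ a t' (pre ++ l') b' noinX nooutY (set_add_subset X' X x HX' Hx) Y1_subset);
      [|exact Er|exact Ha|now rewrite El', app_assoc|now left].
    split; [rewrite Er; discriminate|split].
    + destruct Hdp as [_ [NDp _]]. apply NoDup_app.
      * rewrite Ep' in NDp. exact (NoDup_app_remove_r _ _ NDp).
      * exact (NoDup_app_remove_l qa _ NDq).
      * intros w Hw Hw'. exact (Hpre w Hw (core_on_tail qa c qs w Hq (proj1 Hc) Hw')).
    + destruct Hdp as [_ [_ Wp]]. apply is_walk_app. split.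
      * rewrite Ep' in Wp. now apply is_walk_app in Wp as [Wp _].
      * now apply is_walk_app in Wq as [_ Wq].
  - apply (AB_path_of_ends E X Y _ _ p a t l b noinX nooutY (set_add_subset X' X x HX' Hx) Y1_subset);
      [exact Hdp|exact Ep|exact Ha|exact El|].
    right. exists l. rewrite <- El. apply avoid_bad; [split; [exact Hp|eauto]|exact Havoid].
Qed.

Lemma rerouted_init a : init_vertices rerouted a <-> set_add X' x a.
Proof.
  split.
  - intros [r [[p [[Hp [a' [t [-> Ha']]]] Hr]] Hhd]].
    rewrite (reroute_hd _ r Hr) in Hhd. now injection Hhd as <-.
  - intros Ha. destruct (proj2 (HPinit a) (set_add_subset X' X x HX' Hx a Ha)) as [[|a' t] [Hp Hhd]];
      [discriminate|].
    injection Hhd as ->.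
    assert (Hstart : Pstart (a :: t)) by (split; [exact Hp|eauto]).
    destruct (reroute_exists _ Hstart) as [r Hr].
    exists r. split; [now exists (a :: t)|exact (reroute_hd _ r Hr)].
Qed.

Lemma one_step : exists Z : V -> Prop,
  subset Z Y /\ joinable E (set_add X' x) Z /\ at_most_one (setminus Z Y').
Proof.
  exists Y1. split; [exact Y1_subset|]. split; [|exact Y1_new_unique].
  exists rerouted. split; [split|exact rerouted_init].
  - intros r [p [Hstart Hr]]. exact (reroute_AB_path p r Hstart Hr).
  - exact rerouted_disjoint.
Qed.

End OneStep.

Lemma card_le_setminus_add {V : Type} (A B B1 C D : V -> Prop) (x : V) :
  C x -> ~ D x -> at_most_one (setminus B1 B) ->
  card_le (setminus A B1) (setminus C (set_add D x)) -> card_le (setminus A B) (setminus C D).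
Proof.
  intros Cx Dx Hone [f [Hf Hinj]].
  exists (fun v => if excluded_middle_informative (B1 v) then x else f v). split.
  - intros v [Av Bv]. destruct (excluded_middle_informative (B1 v)) as [B1v|B1v]; [easy|].
    destruct (Hf v (conj Av B1v)) as [Cv Dv]. split; [exact Cv|intros D'v; apply Dv; now left].
  - intros u v [Au Bu] [Av Bv].
    destruct (excluded_middle_informative (B1 u)) as [B1u|B1u];
    destruct (excluded_middle_informative (B1 v)) as [B1v|B1v]; intros Heq.
    + exact (Hone u v (conj B1u Bu) (conj B1v Bv)).
    + destruct (Hf v (conj Av B1v)) as [_ Hv]. exfalso. apply Hv. now right.
    + destruct (Hf u (conj Au B1u)) as [_ Hu]. exfalso. apply Hu. now right.
    + exact (Hinj u v (conj Au B1u) (conj Av B1v) Heq).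
Qed.

Lemma joinable_of_listed_difference {V : Type} (E : V -> V -> Prop) (X Y : V -> Prop) (l : list V) :
  (forall u v, X v -> ~ E u v) -> (forall v w, Y v -> ~ E v w) -> joinable E X Y ->
  forall X' Y', subset X' X -> subset Y' Y -> joinable E X' Y' ->
  (forall v, setminus X X' v -> In v l) ->
  exists Y'', subset Y'' Y /\ joinable E X Y'' /\ card_le (setminus Y'' Y') (setminus X X').
Proof.
  intros noin noout HXY. induction l as [|x l IH]; intros X' Y' HX' HY' HJ Hl.
  - exists Y'. split; [exact HY'|]. split.
    + apply (joinable_ext E X'); [|exact HJ]. intros v. split; [apply HX'|].
      intros Hv. apply NNPP. intros Hv'. exact (Hl v (conj Hv Hv')).
    + exists (fun v => v). split; intros u; [|intros v]; intros [Hu Hu']; contradiction.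
  - destruct (classic (setminus X X' x)) as [[Hx Hx']|Hnew].
    + destruct HXY as [P [HP HPinit]]. destruct HJ as [Q [HQ HQinit]].
      destruct (one_step E X Y X' Y' x P Q noin noout HP HPinit HQ HQinit HX' HY' Hx)
        as [Z [HZ [HJZ Hone]]].
      destruct (IH (set_add X' x) Z) as [Y'' [HY'' [HJ'' Hcard]]]; auto.
      * exact (set_add_subset X' X x HX' Hx).
      * intros v [Hv Hv']. destruct (Hl v (conj Hv (fun H => Hv' (or_introl H)))) as [<-|Hin];
          [exfalso; apply Hv'; now right|exact Hin].
      * exists Y''. split; [exact HY''|]. split; [exact HJ''|].
        exact (card_le_setminus_add Y'' Y' Z X X' x Hx Hx' Hone Hcard).
    + apply IH; auto. intros v Hv. destruct (Hl v Hv) as [<-|Hin]; [contradiction|exact Hin].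
Qed.

Theorem lemma4p3 (V : Type) (E : V -> V -> Prop) (X Y X' Y' : V -> Prop) :
  (forall v, ~ E v v) ->
  (forall u x, X x -> ~ E u x) ->
  (forall y w, Y y -> ~ E y w) ->
  joinable E X Y ->
  subset X' X -> subset Y' Y ->
  joinable E X' Y' ->
  finite_set (setminus X X') ->
  exists Y'' : V -> Prop,
    subset Y'' Y /\ joinable E X Y'' /\
    card_le (setminus Y'' Y') (setminus X X').
Proof.
  intros _ noin noout HXY HX' HY' HJ [l Hl].
  exact (joinable_of_listed_difference E X Y l noin noout HXY X' Y' HX' HY' HJ Hl).
Qed.
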